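(* Consider clipped ADOPT with $\beta_1,\beta_2\in[0,1)$, $\epsilon>0$, learning rates $\alpha_t>0$, clipping values $c_t\ge0$, and deterministic $\theta_0$: $m_0=0$, $v_0=g_0\odot g_0$, and for $t\ge1$, $$m_t=\beta_1m_{t-1}+(1-\beta_1)\,\mathrm{Clip}\Big(\frac{g_t}{\max\{\sqrt{v_{t-1}},\epsilon\}},c_t\Big),\quad\theta_t=\theta_{t-1}-\alpha_tm_t,\quad v_t=\beta_2v_{t-1}+(1-\beta_2)g_t\odot g_t,$$ where $g_0,g_1,\dots$ are random vectors in $\mathbb{R}^D$ with $\mathbb{E}\|g_t\|^2\le G^2$ for all $t\ge0$. Then for all $t\ge0$, $$\mathbb{E}\big[\|m_t\|\big]\le\frac{\sqrt2\,G}{\epsilon}.$$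
   Context: For $a\in\mathbb{R}^D$ and $c\ge0$, $\mathrm{Clip}(a,c)_i=\min\{\max\{a_i,-c\},c\}$. Norms are Euclidean; $\odot$, square root, division and $\max\{\cdot,\epsilon\}$ act elementwise. *)

From HB Require Import structures.
From mathcomp Require Import all_boot all_order all_algebra.
From mathcomp Require Import all_classical all_reals all_analysis.
Set Implicit Arguments. Unset Strict Implicit. Unset Printing Implicit Defensive.
Import Order.TTheory GRing.Theory Num.Theory.
Local Open Scope ring_scope.

Section ADOPT.
Variables (R : realType) (D : nat).

Definition enorm (a : 'rV[R]_D) : R := Num.sqrt (\sum_(i < D) (a 0 i) ^+ 2).

Definition clip (a : 'rV[R]_D) (c : R) : 'rV[R]_D :=
  \row_i Num.min (Num.max (a 0 i) (- c)) c.

Definition hsq (a : 'rV[R]_D) : 'rV[R]_D := \row_i (a 0 i) ^+ 2.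

Definition scaled (g v : 'rV[R]_D) (eps : R) : 'rV[R]_D :=
  \row_i (g 0 i / Num.max (Num.sqrt (v 0 i)) eps).

Fixpoint adopt_state (b1 b2 eps : R) (alpha c : nat -> R) (theta0 : 'rV[R]_D)
    (g : nat -> 'rV[R]_D) (t : nat) : 'rV[R]_D * 'rV[R]_D * 'rV[R]_D :=
  match t with
  | 0 => (0, theta0, hsq (g 0%N))
  | t'.+1 =>
      let: (m, th, v) := adopt_state b1 b2 eps alpha c theta0 g t' in
      let m' := b1 *: m + (1 - b1) *: clip (scaled (g t'.+1) v eps) (c t'.+1) in
      (m', th - alpha t'.+1 *: m', b2 *: v + (1 - b2) *: hsq (g t'.+1))
  end.

Definition adopt_m b1 b2 eps alpha c theta0 g t : 'rV[R]_D :=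
  (adopt_state b1 b2 eps alpha c theta0 g t).1.1.

End ADOPT.

From HB Require Import structures.
From mathcomp Require Import all_boot all_order all_algebra.
From mathcomp Require Import all_classical all_reals all_analysis.
From mathcomp Require Import ring lra measurable_realfun.

Set Implicit Arguments.
Unset Strict Implicit.
Unset Printing Implicit Defensive.

Import Order.TTheory GRing.Theory Num.Theory.
Local Open Scope ring_scope.

(** Clipping only shrinks coordinates and dividing by
    [max{sqrt v, eps}] divides by at least [eps], so the clipped update has
    squared norm at most [|g_t|^2 / eps^2].  By convexity of the square,
    [|m_t|^2] is then dominated pathwise by the moving average
    [M_t = b1 M_(t-1) + (1 - b1) |g_t|^2 / eps^2], whose expectation stays
    below [(G / eps)^2].  Hence [E|m_t| <= G / eps <= sqrt 2 G / eps], the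
    first step being [E X <= sqrt (E X^2)], obtained from
    [x <= x^2 / (2 d) + d / 2] with [d] just above [G / eps]. *)

Fixpoint ema (R : pzSemiRingType) (b k : R) (S : nat -> R) (n : nat) : R :=
  if n is n'.+1 then b * ema b k S n' + k * S n else 0.

Lemma ema_ge0 (R : numDomainType) (b k : R) (S : nat -> R) n :
  0 <= b -> 0 <= k -> (forall s, 0 <= S s) -> 0 <= ema b k S n.
Proof.
move=> b0 k0 S0; elim: n => [|n IH] //=.
by rewrite addr_ge0 // mulr_ge0.
Qed.

Lemma sqr_convex_le (R : realDomainType) (b x y : R) : 0 <= b <= 1 ->
  (b * x + (1 - b) * y) ^+ 2 <= b * x ^+ 2 + (1 - b) * y ^+ 2.
Proof.
move=> /andP[b0 b1].
have gap : b * x ^+ 2 + (1 - b) * y ^+ 2 - (b * x + (1 - b) * y) ^+ 2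
         = b * (1 - b) * (x - y) ^+ 2 by ring.
by rewrite -subr_ge0 gap mulr_ge0 ?sqr_ge0 // mulr_ge0 // subr_ge0.
Qed.

Lemma sqr_clip_le (R : realDomainType) (x c : R) : 0 <= c ->
  Num.min (Num.max x (- c)) c ^+ 2 <= x ^+ 2.
Proof.
move=> c0; rewrite maxEle minEle.
by have [xNc|Ncx] := leP x (- c); have [|] := leP _ c; nra.
Qed.

Lemma sqr_div_max_le (R : realFieldType) (x s e : R) : 0 < e ->
  (x / Num.max s e) ^+ 2 <= x ^+ 2 / e ^+ 2.
Proof.
move=> e0; have e_le : e <= Num.max s e by rewrite le_max lexx orbT.
rewrite expr_div_n ler_wpM2l ?sqr_ge0 // lef_pV2 ?posrE ?exprn_gt0 //.
  by rewrite ler_pXn2r // nnegrE ltW // (lt_le_trans e0).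
exact: lt_le_trans e_le.
Qed.

Section integral_bounds.
Variables (R : realType) (d : measure_display) (T : measurableType d).
Local Open Scope ereal_scope.

(* The nonnegative integral is a supremum over simple functions below the
   integrand, so no measurability is needed here; this spares us proving
   [|m_t|] measurable. *)
Lemma ge0_le_integral_nonmeasurable (mu : {measure set T -> \bar R})
    (f1 f2 : T -> \bar R) :
  (forall x, 0 <= f1 x) -> (forall x, f1 x <= f2 x) ->
  \int[mu]_x f1 x <= \int[mu]_x f2 x.
Proof.
move=> f10 f12.
have f20 x : 0 <= f2 x by exact: le_trans (f10 x) (f12 x).
rewrite !ge0_integralE //; apply: ereal_sup_le => _ [h hf1 <-].
by exists h => // x; apply: le_trans (hf1 x) _; rewrite /patch /= !mem_set.
Qed.

Lemma measurable_ema (b k : R) (S : nat -> T -> R) n :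
  (forall s, measurable_fun setT (S s)) ->
  measurable_fun setT (fun w => ema b k (S ^~ w) n).
Proof.
move=> mS; elim: n => [|n IH] /=; first exact: measurable_cst.
by apply: measurable_funD; apply: measurable_funM => //; exact: measurable_cst.
Qed.

Lemma integral_ema_le (mu : {measure set T -> \bar R}) (b k B C : R)
    (S : nat -> T -> R) n :
  (0 <= b)%R -> (0 <= k)%R -> (0 <= C)%R -> (b * C + k * B <= C)%R ->
  (forall s w, 0 <= S s w)%R -> (forall s, measurable_fun setT (S s)) ->
  (forall s, \int[mu]_w (S s w)%:E <= B%:E) ->
  \int[mu]_w (ema b k (S ^~ w) n)%:E <= C%:E.
Proof.
move=> b0 k0 C0 bC S0 mS IS; elim: n => [|n IH] /=.
  by rewrite integral0_eq // lee_fin.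
have ema0 w : (0 <= ema b k (S ^~ w) n)%R by apply: ema_ge0.
have mema : measurable_fun setT (fun w => (ema b k (S ^~ w) n)%:E).
  exact/measurable_EFinP/measurable_ema.
have mSn : measurable_fun setT (fun w => (S n.+1 w)%:E) by exact/measurable_EFinP.
rewrite (eq_integral (fun w => b%:E * (ema b k (S ^~ w) n)%:E
                               + k%:E * (S n.+1 w)%:E)); last first.
  by move=> w _; rewrite EFinD !EFinM.
rewrite ge0_integralD //; last 4 first.
- by move=> w _; rewrite mule_ge0 ?lee_fin.
- exact: measurable_funeM.
- by move=> w _; rewrite mule_ge0 ?lee_fin.
- exact: measurable_funeM.
rewrite (ge0_integralZl_EFin _ _ (f1 := fun w => (ema b k (S ^~ w) n)%:E)) //;
  last by move=> w _; rewrite lee_fin.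
rewrite (ge0_integralZl_EFin _ _ (f1 := fun w => (S n.+1 w)%:E)) //;
  last by move=> w _; rewrite lee_fin.
apply: le_trans (_ : b%:E * C%:E + k%:E * B%:E <= _).
  by apply: leeD; apply: lee_wpmul2l; rewrite ?lee_fin.
by rewrite -!EFinM -EFinD lee_fin.
Qed.

Lemma integral_le_of_sqr_le (P : probability T R) (f h : T -> R) (K : R) :
  (forall w, 0 <= f w)%R -> (forall w, f w ^+ 2 <= h w)%R ->
  (forall w, 0 <= h w)%R -> measurable_fun setT h -> (0 <= K)%R ->
  \int[P]_w (h w)%:E <= (K ^+ 2)%:E ->
  \int[P]_w (f w)%:E <= K%:E.
Proof.
move=> f0 fh h0 mh K0 Ih; apply/lee_addgt0Pr => e e0.
pose dl := (K + e)%R; have dl0 : (0 < dl)%R by rewrite /dl; lra.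
have idl0 : (0 <= (2 * dl)^-1)%R by rewrite invr_ge0; lra.
(* AM-GM: [x <= x^2 / (2 dl) + dl / 2] *)
apply: le_trans (ge0_le_integral_nonmeasurable P
  (f2 := fun w => ((2 * dl)^-1)%:E * (h w)%:E + (dl / 2)%:E) _ _) _.
- by move=> w; rewrite lee_fin.
- move=> w; rewrite -EFinM -EFinD lee_fin.
  have amgm : ((2 * dl)^-1 * f w ^+ 2 + dl / 2 - f w
             = (2 * dl)^-1 * (f w - dl) ^+ 2)%R by field; lra.
  have := ler_wpM2l idl0 (fh w).
  have : (0 <= (2 * dl)^-1 * (f w - dl) ^+ 2)%R by rewrite mulr_ge0 ?sqr_ge0.
  lra.
have mhE : measurable_fun setT (fun w => (h w)%:E) by exact/measurable_EFinP.
rewrite ge0_integralD //; last 3 first.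
- by move=> w _; rewrite mule_ge0 ?lee_fin.
- exact: measurable_funeM.
- by move=> w _; rewrite lee_fin; lra.
rewrite (ge0_integralZl_EFin _ _ (f1 := fun w => (h w)%:E)) //;
  last by move=> w _; rewrite lee_fin.
have -> : \int[P]_w (dl / 2)%:E = (dl / 2)%:E.
  by rewrite -[RHS]mule1 -(probability_setT P); exact: integral_cst.
apply: le_trans (_ : ((2 * dl)^-1)%:E * (K ^+ 2)%:E + (dl / 2)%:E <= _).
  by rewrite leeD2r // lee_wpmul2l ?lee_fin.
rewrite -EFinM -EFinD lee_fin.
have : ((2 * dl)^-1 * K ^+ 2 <= (2 * dl)^-1 * dl ^+ 2)%R.
  by rewrite ler_wpM2l // /dl; nra.
have -> : ((2 * dl)^-1 * dl ^+ 2 = dl / 2)%R by field; lra.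
rewrite /dl; lra.
Qed.

End integral_bounds.

Section adopt.
Variables (R : realType) (D : nat).

Definition sqnorm (a : 'rV[R]_D) : R := \sum_(i < D) a 0 i ^+ 2.

Lemma sqnorm_ge0 a : 0 <= sqnorm a.
Proof. by apply: sumr_ge0 => i _; exact: sqr_ge0. Qed.

Lemma enorm_sqr a : enorm a ^+ 2 = sqnorm a.
Proof. exact/sqr_sqrtr/sqnorm_ge0. Qed.

Lemma sqnorm_convex_le (b : R) (a x : 'rV[R]_D) : 0 <= b <= 1 ->
  sqnorm (b *: a + (1 - b) *: x) <= b * sqnorm a + (1 - b) * sqnorm x.
Proof.
move=> b01; rewrite /sqnorm !mulr_sumr -big_split /=.
by apply: ler_sum => i _; rewrite !mxE sqr_convex_le.
Qed.

Lemma sqnorm_clip_scaled_le (g v : 'rV[R]_D) (eps c : R) : 0 < eps -> 0 <= c ->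
  sqnorm (clip (scaled g v eps) c) <= sqnorm g / eps ^+ 2.
Proof.
move=> e0 c0; rewrite /sqnorm mulr_suml; apply: ler_sum => i _.
by rewrite !mxE; apply: le_trans (sqr_clip_le _ c0) _; exact: sqr_div_max_le.
Qed.

Variables (b1 b2 eps : R) (alpha c : nat -> R) (theta0 : 'rV[R]_D).

Lemma adopt_mS (g : nat -> 'rV[R]_D) t :
  adopt_m b1 b2 eps alpha c theta0 g t.+1 =
  b1 *: adopt_m b1 b2 eps alpha c theta0 g t +
  (1 - b1) *: clip (scaled (g t.+1)
                     (adopt_state b1 b2 eps alpha c theta0 g t).2 eps) (c t.+1).
Proof. by rewrite /adopt_m /=; case: adopt_state => [[m th] v]. Qed.

Lemma adopt_m_sqnorm_le (g : nat -> 'rV[R]_D) t :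
  0 <= b1 <= 1 -> 0 < eps -> (forall s, 0 <= c s) ->
  sqnorm (adopt_m b1 b2 eps alpha c theta0 g t)
  <= ema b1 ((1 - b1) / eps ^+ 2) (fun s => sqnorm (g s)) t.
Proof.
move=> /[dup] b01 /andP[b0 b1le1] e0 c0; elim: t => [|t IH] /=.
  by rewrite /sqnorm big1 // => i _; rewrite mxE expr0n.
rewrite adopt_mS; apply: le_trans (sqnorm_convex_le _ _ b01) _.
rewrite -mulrA lerD ?ler_wpM2l ?subr_ge0 //.
by rewrite mulrC sqnorm_clip_scaled_le.
Qed.

End adopt.

Theorem lemmaG14 (R : realType) (d : measure_display) (T : measurableType d)
  (P : probability T R) (D : nat)
  (b1 b2 eps G : R) (alpha c : nat -> R) (theta0 : 'rV[R]_D)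
  (g : nat -> T -> 'rV[R]_D) :
  0 <= b1 < 1 -> 0 <= b2 < 1 -> 0 < eps ->
  (forall t, 0 < alpha t) -> (forall t, 0 <= c t) -> 0 <= G ->
  (forall t (i : 'I_D), measurable_fun setT (fun w => g t w 0 i)) ->
  (forall t, (\int[P]_w ((enorm (g t w)) ^+ 2)%:E <= (G ^+ 2)%:E)%E) ->
  forall t : nat,
    (\int[P]_w (enorm (adopt_m b1 b2 eps alpha c theta0 (fun s => g s w) t))%:E
       <= (Num.sqrt 2 * G / eps)%:E)%E.
Proof.
move=> /andP[b10 /ltW b1le1] _ e0 _ c0 G0 mg Hg t.
have b01 : 0 <= b1 <= 1 by rewrite b10 b1le1.
pose k := (1 - b1) / eps ^+ 2.
have k0 : 0 <= k by rewrite divr_ge0 ?sqr_ge0 ?subr_ge0.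
pose S s w := sqnorm (g s w).
have mS s : measurable_fun setT (S s).
  by apply: measurable_sum => i; exact: measurable_funX.
have IS s : (\int[P]_w (S s w)%:E <= (G ^+ 2)%:E)%E.
  by under eq_integral do rewrite /S -enorm_sqr.
have Geps0 : 0 <= G / eps by rewrite divr_ge0 // ltW.
apply: (@le_trans _ _ (G / eps)%:E); last first.
  by rewrite lee_fin -mulrA ler_peMl // -{1}sqrtr1 ler_sqrt // ler1n.
apply: (integral_le_of_sqr_le (h := fun w => ema b1 k (S ^~ w) t)).
- by move=> w; exact: sqrtr_ge0.
- by move=> w; rewrite enorm_sqr adopt_m_sqnorm_le.
- by move=> w; apply: ema_ge0 => // s; exact: sqnorm_ge0.
- exact: measurable_ema.
- exact: Geps0.
apply: integral_ema_le => //.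
- exact: sqr_ge0.
- rewrite le_eqVlt; apply/orP; left; apply/eqP.
  rewrite /k; field; exact: lt0r_neq0.
- by move=> s w; exact: sqnorm_ge0.
Qed.
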